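(* Consider the following model. A principal P and an agent A interact over two periods $t\in\{1,2\}$. States $\omega_t\in\{0,1\}$ satisfy $\Pr[\omega_1=1]=\mu_0\in(0,1)$ and $\Pr[\omega_2=\omega\mid\omega_1=\omega]=\rho\in(1/2,1)$. In each period A chooses $e_t\in\{0,1\}$; if $e_t=1$ he observes $\omega_t$, if $e_t=0$ he observes $\omega_t$ with probability $\pi\in(0,1)$ and nothing otherwise. A then reports $r_t\in\{\varnothing,\omega_t\}$ if he observed $\omega_t$, and $r_t=\varnothing$ otherwise. A's payoff is $x-c(e_1+e_2)$ with $c>0$, where $x\in\{0,1\}$ is P's assignment at the end of period 2; A best-responds and, when indifferent, follows the recommendation and discloses. Let $\gamma=c/(1-\pi)$ and $\mu_2(\varnothing)=\rho\mu_0+(1-\rho)(1-\mu_0)$. Let $\sigma^{RD1}$ be the testing policy $\sigma_1=0$, $\sigma_2(0)=0$, $\sigma_2(1)=1$, $\sigma_2(\varnothing)=1$, and let the assignment be $\hat x(r_1,r_2)=\mathbb{1}[r_2=1]$. If $\gamma\in(1-\rho,\mu_2(\varnothing)]$, then under this mechanism A fully discloses (in both periods) all the information he acquires.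
   Context: The assignment $\hat x(r_1,r_2)=\mathbb{1}[r_2=1]$ coincides with the efficient assignment $\mathbb{1}[\mu_2(h_2)\ge1/2]$ on histories occurring with positive probability under $\sigma^{RD1}$ and assigns $0$ when a requested test result is not reported. *)

From HB Require Import structures.
From mathcomp Require Import all_boot all_order all_algebra.
Set Implicit Arguments. Unset Strict Implicit. Unset Printing Implicit Defensive.
Import Order.TTheory GRing.Theory Num.Theory.
Local Open Scope ring_scope.

(* Signals / reports: [None] = nothing (varnothing), [Some w] = state w. *)

Definition feasible_report (s r : option bool) : Prop := r = None \/ r = s.

Definition sigprob (R : realFieldType) (pi : R) (e w : bool) (s : option bool) : R :=
  match s with
  | Some w' => if w' == w then (if e then 1 else pi) else 0
  | None => if e then 0 else 1 - pi
  end.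

Definition prob_of (R : realFieldType) (b : R) (w : bool) : R := if w then b else 1 - b.

Definition belief1 (R : realFieldType) (mu0 : R) (s1 : option bool) : R :=
  match s1 with Some w => (w : nat)%:R | None => mu0 end.

Definition belief2 (R : realFieldType) (mu0 rho : R) (s1 : option bool) : R :=
  rho * belief1 mu0 s1 + (1 - rho) * (1 - belief1 mu0 s1).

Definition mu2_empty (R : realFieldType) (mu0 rho : R) : R :=
  rho * mu0 + (1 - rho) * (1 - mu0).

Record mechanism := Mechanism {
  rec1 : bool;
  rec2 : option bool -> bool;
  assign : option bool -> option bool -> bool }.

Definition mechRD1 : mechanism :=
  {| rec1 := false;
     rec2 := fun r1 => match r1 with Some false => false | _ => true end;
     assign := fun _ r2 => r2 == Some true |}.

Record agent_strategy := AgentStrategy {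
  eff1 : bool;
  rep1 : bool -> option bool -> option bool;                      (* e1, s1 *)
  eff2 : bool -> option bool -> option bool -> bool;              (* e1, s1, r1 *)
  rep2 : bool -> option bool -> option bool -> bool -> option bool -> option bool
    (* e1, s1, r1, e2, s2 *) }.

(* a is optimal among feasible actions for value v, and if the preferred action
   (recommendation / disclosure) is itself optimal, then a is that action. *)
Definition best_tb (A : Type) (R : realFieldType) (feas : A -> Prop) (v : A -> R)
  (pref a : A) : Prop :=
  [/\ feas a, (forall b, feas b -> v b <= v a)
   & (feas pref /\ (forall b, feas b -> v b <= v pref)) -> a = pref].

Section Values.
Variables (R : realFieldType) (M : mechanism) (mu0 rho pi c : R) (st : agent_strategy).

(* continuation payoff of report r2 (effort costs are sunk) *)
Definition val_rep2 (r1 r2 : option bool) : R := (assign M r1 r2 : nat)%:R.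

Definition val_eff2 (e1 : bool) (s1 r1 : option bool) (e2 : bool) : R :=
  \sum_(w : bool) \sum_(s2 : option bool)
     prob_of (belief2 mu0 rho s1) w * sigprob pi e2 w s2
       * (assign M r1 (rep2 st e1 s1 r1 e2 s2) : nat)%:R
  - c * (e2 : nat)%:R.

Definition val_rep1 (e1 : bool) (s1 r1 : option bool) : R :=
  val_eff2 e1 s1 r1 (eff2 st e1 s1 r1).

Definition val_eff1 (e1 : bool) : R :=
  \sum_(w : bool) \sum_(s1 : option bool)
     prob_of mu0 w * sigprob pi e1 w s1 * val_rep1 e1 s1 (rep1 st e1 s1)
  - c * (e1 : nat)%:R.

Definition best_response : Prop :=
  [/\ (forall e1 s1 r1 e2 s2, feasible_report s1 r1 ->
         best_tb (feasible_report s2) (val_rep2 r1) s2 (rep2 st e1 s1 r1 e2 s2)),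
      (forall e1 s1 r1, feasible_report s1 r1 ->
         best_tb (fun _ => True) (val_eff2 e1 s1 r1) (rec2 M r1) (eff2 st e1 s1 r1)),
      (forall e1 s1,
         best_tb (feasible_report s1) (val_rep1 e1 s1) s1 (rep1 st e1 s1))
    & best_tb (fun _ => True) val_eff1 (rec1 M) (eff1 st)].

End Values.

Definition full_disclosure (st : agent_strategy) : Prop :=
  (forall e1 w, rep1 st e1 (Some w) = Some w) /\
  (forall e1 s1 r1 e2 w, feasible_report s1 r1 ->
      rep2 st e1 s1 r1 e2 (Some w) = Some w).

From mathcomp Require Import all_boot all_order all_algebra.
Import Order.TTheory GRing.Theory Num.Theory.
Local Open Scope ring_scope.

(* Disclosure is weakly dominant as soon as the assignment ignores [r1] and
   never punishes a disclosed period-2 state relative to silence.  In period 2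
   the tie-breaking rule then forces disclosure outright.  Given that, the
   period-2 continuation value of every effort level no longer depends on
   [r1], so all period-1 reports are payoff-equivalent and the tie-breaking
   rule again selects disclosure. *)

Definition disclosure_monotone (M : mechanism) : Prop :=
  forall r1 w, assign M r1 None ==> assign M r1 (Some w).

Definition assign_ignores_r1 (M : mechanism) : Prop :=
  forall r1 r1' r2, assign M r1 r2 = assign M r1' r2.

Lemma best_tb_pref {A : Type} {R : realFieldType} {feas : A -> Prop}
    {v : A -> R} {pref a : A} :
  best_tb feas v pref a -> feas pref -> (forall b, feas b -> v b <= v pref) ->
  a = pref.
Proof. by case=> _ _ tb ? ?; apply: tb. Qed.

Section Disclosure.
Context {R : realFieldType} {M : mechanism} {mu0 rho pi c : R}.
Context {st : agent_strategy}.
Hypothesis monoM : disclosure_monotone M.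
Hypothesis br : best_response M mu0 rho pi c st.

Lemma rep2_disclose e1 s1 r1 e2 s2 :
  feasible_report s1 r1 -> rep2 st e1 s1 r1 e2 s2 = s2.
Proof.
case: br => br2 _ _ _ fr1; have br2' := br2 e1 s1 r1 e2 s2 fr1.
case: s2 br2' => [w|] br2'; last by case: br2' => -[].
apply: (best_tb_pref br2'); first by right.
move=> b [->|->] //; rewrite /val_rep2 ler_nat.
by have := monoM r1 w; case: (assign M r1 _); case: (assign M r1 _).
Qed.

Hypothesis ignoreM : assign_ignores_r1 M.

Lemma val_eff2_r1_indep {e1 s1 r1 r1'} e2 :
  feasible_report s1 r1 -> feasible_report s1 r1' ->
  val_eff2 M mu0 rho pi c st e1 s1 r1 e2 = val_eff2 M mu0 rho pi c st e1 s1 r1' e2.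
Proof.
move=> fr1 fr1'; rewrite /val_eff2; congr (_ - _).
apply: eq_bigr => w _; apply: eq_bigr => s2 _.
by rewrite !rep2_disclose // (ignoreM r1 r1').
Qed.

Lemma rep1_disclose e1 w : rep1 st e1 (Some w) = Some w.
Proof.
have disclosed : feasible_report (Some w) (Some w) by right.
case: br => _ br_eff2 br_rep1 _.
apply: (best_tb_pref (br_rep1 e1 (Some w)) disclosed) => r1 fr1.
have [_ opt_eff2 _] := br_eff2 e1 (Some w) (Some w) disclosed.
rewrite /val_rep1 (val_eff2_r1_indep _ fr1 disclosed).
exact: opt_eff2.
Qed.

Lemma best_response_full_disclosure : full_disclosure st.
Proof.
split; first exact: rep1_disclose.
by move=> e1 s1 r1 e2 w; apply: rep2_disclose.
Qed.

End Disclosure.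

Lemma mechRD1_disclosure_monotone : disclosure_monotone mechRD1.
Proof. by []. Qed.

Lemma mechRD1_assign_ignores_r1 : assign_ignores_r1 mechRD1.
Proof. by []. Qed.

Theorem lemma2 (R : realFieldType) (mu0 rho pi c : R) (st : agent_strategy) :
  0 < mu0 < 1 -> 2^-1 < rho < 1 -> 0 < pi < 1 -> 0 < c ->
  1 - rho < c / (1 - pi) <= mu2_empty mu0 rho ->
  best_response mechRD1 mu0 rho pi c st ->
  full_disclosure st.
Proof.
move=> _ _ _ _ _ br.
exact: (best_response_full_disclosure mechRD1_disclosure_monotone br
          mechRD1_assign_ignores_r1).
Qed.
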